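(* Let $(X,\rho)$ be a metric space, $A,B$ nonempty subsets of $X$, and $T:A\cup B\to A\cup B$ a cyclic map for which there is $\lambda\in[0,1)$ such that $$\rho(Tx,Ty)\le\lambda\max\{\rho(x,y),\rho(x,Tx),\rho(y,Ty)\}+(1-\lambda)\,\mathrm{dist}(A,B)$$ for all $x\in A$, $y\in B$. Then for every $x\in A\cup B$ the sequence of iterates $\{T^nx\}_{n=1}^\infty$ is bounded.
   Context: $\mathrm{dist}(A,B)=\inf\{\rho(a,b):a\in A,\ b\in B\}$. A map $T:A\cup B\to A\cup B$ is cyclic if $T(A)\subseteq B$ and $T(B)\subseteq A$. *)

From Stdlib Require Import Reals.
From Coquelicot Require Import Coquelicot.
Open Scope R_scope.

Definition is_metric {X : Type} (rho : X -> X -> R) : Prop :=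
  (forall x y, 0 <= rho x y) /\
  (forall x y, rho x y = 0 <-> x = y) /\
  (forall x y, rho x y = rho y x) /\
  (forall x y z, rho x z <= rho x y + rho y z).

Definition dist_set {X : Type} (rho : X -> X -> R) (A B : X -> Prop) : R :=
  real (Glb_Rbar (fun r => exists a b, A a /\ B b /\ r = rho a b)).

Definition cyclic_map {X : Type} (A B : X -> Prop) (T : X -> X) : Prop :=
  (forall x, A x -> B (T x)) /\ (forall y, B y -> A (T y)).

Definition bounded_seq {X : Type} (rho : X -> X -> R) (u : nat -> X) : Prop :=
  exists M : R, forall n m : nat, (1 <= n)%nat -> (1 <= m)%nat -> rho (u n) (u m) <= M.

From Stdlib Require Import Reals Lra Lia.
From Coquelicot Require Import Coquelicot.
Open Scope R_scope.

(* Fix x in A ∪ B and write x_n = T^n x.  Consecutive iterates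
   x_n, x_(n+1) lie on opposite sides, and so do x_0 and every odd iterate.
   1. The successive distances d_n = rho(x_n, x_(n+1)) never exceed
      K = max(d_0, D), where D = dist(A,B): if d_(n+1) > K, the contraction
      inequality for (x_n, x_(n+1)) would force d_(n+1) <= D.
   2. The distances e_n = rho(x_n, x_0) to the starting point satisfy
      e_(n+1) <= e_n + K, and, applying the contraction inequality to the
      opposite pair (x_0, x_(2k+1)), the affine recursion
      e_(2k+2) <= lambda (e_(2k) + K) + (1 - lambda) D + K.
      Since lambda < 1, such a recursion keeps e_(2k) below a fixed bound.
   3. Hence all e_n are bounded, and so is the orbit by the triangle
      inequality.  The value of D as an infimum is never used: the argument
      works for an arbitrary constant D in the contraction inequality. *)

Lemma mixture_self_bound (lambda x y D K : R) :
  0 <= lambda < 1 -> x <= K -> D <= K ->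
  y <= lambda * Rmax x y + (1 - lambda) * D -> y <= K.
Proof.
  intros Hl HxK HDK Hy.
  destruct (Rle_or_lt y K) as [Hle | Hgt]; [exact Hle | exfalso].
  rewrite Rmax_right in Hy by lra.
  assert (Hmul : (1 - lambda) * y <= (1 - lambda) * D) by lra.
  apply Rmult_le_reg_l in Hmul; lra.
Qed.

Lemma affine_recursion_bound (lambda c M : R) (u : nat -> R) :
  0 <= lambda -> u 0%nat <= M -> lambda * M + c <= M ->
  (forall k, u (S k) <= lambda * u k + c) -> forall k, u k <= M.
Proof.
  intros Hl H0 HM Hrec k; induction k as [|k IH]; [exact H0|].
  pose proof (Hrec k).
  assert (lambda * u k <= lambda * M) by (apply Rmult_le_compat_l; lra).
  lra.
Qed.

Lemma affine_invariant_bound (lambda c : R) :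
  0 <= lambda < 1 -> exists M, 0 <= M /\ lambda * M + c <= M.
Proof.
  intros Hl. exists (Rmax 0 (c / (1 - lambda))). split; [apply Rmax_l|].
  assert (Hc : c <= (1 - lambda) * Rmax 0 (c / (1 - lambda))).
  { replace c with ((1 - lambda) * (c / (1 - lambda))) at 1 by (field; lra).
    apply Rmult_le_compat_l; [lra | apply Rmax_r]. }
  lra.
Qed.

Section CyclicOrbit.

Variables (X : Type) (rho : X -> X -> R) (A B : X -> Prop) (T : X -> X).
Variables (lambda D : R).

Hypothesis rho_nonneg : forall x y, 0 <= rho x y.
Hypothesis rho_refl : forall x, rho x x = 0.
Hypothesis rho_sym : forall x y, rho x y = rho y x.
Hypothesis rho_triangle : forall x y z, rho x z <= rho x y + rho y z.
Hypothesis T_cyclic : cyclic_map A B T.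
Hypothesis lambda_range : 0 <= lambda < 1.
Hypothesis T_contraction : forall x y, A x -> B y ->
  rho (T x) (T y) <=
    lambda * Rmax (rho x y) (Rmax (rho x (T x)) (rho y (T y))) + (1 - lambda) * D.

Definition opposite (u v : X) : Prop := (A u /\ B v) \/ (B u /\ A v).

(* The contraction inequality is symmetric, so it holds for all opposite pairs. *)
Lemma contraction_opposite u v : opposite u v ->
  rho (T u) (T v) <=
    lambda * Rmax (rho u v) (Rmax (rho u (T u)) (rho v (T v))) + (1 - lambda) * D.
Proof.
  intros [[Hu Hv] | [Hu Hv]]; [now apply T_contraction|].
  rewrite rho_sym, (rho_sym u v), (Rmax_comm (rho u (T u))).
  now apply T_contraction.
Qed.

Lemma opposite_T u v : opposite u v -> opposite (T u) (T v).
Proof.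
  destruct T_cyclic as [HAB HBA].
  intros [[Hu Hv] | [Hu Hv]]; [right | left]; auto.
Qed.

Lemma opposite_TT u v : opposite u v -> opposite u (T (T v)).
Proof.
  destruct T_cyclic as [HAB HBA].
  intros [[Hu Hv] | [Hu Hv]]; [left | right]; auto.
Qed.

Variable x : X.
Hypothesis x_in_union : A x \/ B x.

Let xs (n : nat) : X := Nat.iter n T x.

Lemma opposite_consecutive n : opposite (xs n) (xs (S n)).
Proof.
  induction n as [|n IH].
  - destruct T_cyclic as [HAB HBA].
    destruct x_in_union; [left | right]; simpl; auto.
  - exact (opposite_T _ _ IH).
Qed.

Lemma opposite_start_odd k : opposite (xs 0) (xs (2 * k + 1)).
Proof.
  induction k as [|k IH]; [exact (opposite_consecutive 0)|].
  replace (2 * S k + 1)%nat with (S (S (2 * k + 1))) by lia.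
  exact (opposite_TT _ _ IH).
Qed.

Let K : R := Rmax (rho (xs 0) (xs 1)) D.

Lemma successive_dist_bound n : rho (xs n) (xs (S n)) <= K.
Proof.
  induction n as [|n IH]; [apply Rmax_l|].
  pose proof (contraction_opposite _ _ (opposite_consecutive n)) as Hc.
  change (rho (xs (S n)) (xs (S (S n))) <=
    lambda * Rmax (rho (xs n) (xs (S n)))
      (Rmax (rho (xs n) (xs (S n))) (rho (xs (S n)) (xs (S (S n)))))
    + (1 - lambda) * D) in Hc.
  rewrite Rmax_assoc, (Rmax_left (rho _ _) (rho _ _) (Rle_refl _)) in Hc.
  exact (mixture_self_bound _ _ _ _ _ lambda_range IH (Rmax_r _ _) Hc).
Qed.

Lemma K_nonneg : 0 <= K.
Proof. apply Rle_trans with (rho (xs 0) (xs 1)); [apply rho_nonneg | apply Rmax_l]. Qed.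

Let e (n : nat) : R := rho (xs n) (xs 0).

Lemma start_dist_step n : e (S n) <= e n + K.
Proof.
  unfold e. pose proof (successive_dist_bound n).
  pose proof (rho_triangle (xs (S n)) (xs n) (xs 0)).
  rewrite (rho_sym (xs (S n)) (xs n)) in *. lra.
Qed.

(* Step 2: the contraction on (x_0, x_(2k+1)) gives an affine recursion
   along the even iterates. *)
Lemma start_dist_even_recursion k :
  e (2 * S k) <= lambda * e (2 * k) + (lambda * K + (1 - lambda) * D + K).
Proof.
  replace (2 * S k)%nat with (S (S (2 * k))) by lia.
  pose proof (contraction_opposite _ _ (opposite_start_odd k)) as Hc.
  replace (2 * k + 1)%nat with (S (2 * k)) in Hc by lia.
  change (rho (xs 1) (xs (S (S (2 * k)))) <=
    lambda * Rmax (rho (xs 0) (xs (S (2 * k))))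
      (Rmax (rho (xs 0) (xs 1)) (rho (xs (S (2 * k))) (xs (S (S (2 * k))))))
    + (1 - lambda) * D) in Hc.
  assert (Hmax : Rmax (rho (xs 0) (xs (S (2 * k))))
      (Rmax (rho (xs 0) (xs 1)) (rho (xs (S (2 * k))) (xs (S (S (2 * k))))))
      <= e (2 * k) + K).
  { pose proof (start_dist_step (2 * k)). pose proof (successive_dist_bound 0).
    pose proof (successive_dist_bound (S (2 * k))).
    pose proof (rho_nonneg (xs (2 * k)) (xs 0)).
    unfold e in *. rewrite (rho_sym (xs 0)).
    repeat apply Rmax_lub; lra. }
  assert (lambda * Rmax (rho (xs 0) (xs (S (2 * k))))
      (Rmax (rho (xs 0) (xs 1)) (rho (xs (S (2 * k))) (xs (S (S (2 * k))))))
      <= lambda * (e (2 * k) + K)) by (apply Rmult_le_compat_l; lra).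
  pose proof (rho_triangle (xs (S (S (2 * k)))) (xs 1) (xs 0)).
  pose proof (successive_dist_bound 0).
  unfold e in *. rewrite (rho_sym (xs 1) (xs 0)), (rho_sym (xs 1)) in *. lra.
Qed.

Lemma start_dist_bounded : exists M, forall n, e n <= M.
Proof.
  destruct (affine_invariant_bound lambda (lambda * K + (1 - lambda) * D + K)
    lambda_range) as [M [HM0 HM]].
  assert (Heven : forall k, e (2 * k) <= M).
  { apply (affine_recursion_bound lambda (lambda * K + (1 - lambda) * D + K) M (fun k => e (2 * k)));
      [lra | | exact HM | exact start_dist_even_recursion].
    unfold e; simpl; rewrite rho_refl; exact HM0. }
  exists (M + K). intro n.
  destruct (Nat.Even_or_Odd n) as [[k ->] | [k ->]].
  - pose proof (Heven k). pose proof K_nonneg. lra.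
  - replace (2 * k + 1)%nat with (S (2 * k)) by lia.
    pose proof (Heven k). pose proof (start_dist_step (2 * k)). lra.
Qed.

Lemma orbit_bounded : bounded_seq rho xs.
Proof.
  destruct start_dist_bounded as [M HM].
  exists (2 * M). intros n m _ _.
  pose proof (rho_triangle (xs n) (xs 0) (xs m)).
  pose proof (HM n). pose proof (HM m).
  unfold e in *. rewrite (rho_sym (xs 0)) in *. lra.
Qed.

End CyclicOrbit.

Theorem lemma32 (X : Type) (rho : X -> X -> R) (A B : X -> Prop) (T : X -> X)
  (lambda : R) :
  is_metric rho ->
  (exists a, A a) -> (exists b, B b) ->
  cyclic_map A B T ->
  0 <= lambda < 1 ->
  (forall x y, A x -> B y ->
     rho (T x) (T y) <=
       lambda * Rmax (rho x y) (Rmax (rho x (T x)) (rho y (T y)))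
       + (1 - lambda) * dist_set rho A B) ->
  forall x, A x \/ B x -> bounded_seq rho (fun n => Nat.iter n T x).
Proof.
  intros [Hpos [Hzero [Hsym Htri]]] _ _ Hcyc Hl Hcontr x Hx.
  assert (Hrefl : forall y, rho y y = 0) by (intro y; now apply Hzero).
  exact (orbit_bounded X rho A B T lambda (dist_set rho A B)
    Hpos Hrefl Hsym Htri Hcyc Hl Hcontr x Hx).
Qed.
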